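(* Let $D$ be a strongly connected digraph with at least two vertices. Then (a) $src^*(D)=1$ if and only if $rc^*(D)=1$, if and only if $D$ is the biorientation $\overleftrightarrow{K_n}$ of the complete graph $K_n$ for some $n\ge 2$; (b) $rc^*(D)=2$ if and only if $src^*(D)=2$.
   Context: All digraphs are finite, without loops or multiple arcs. For a strongly connected digraph $D$ and an arc-colouring $\Gamma:A(D)\to\{1,\dots,k\}$, a directed path is rainbow if no two of its arcs receive the same colour. $\Gamma$ is rainbow connected if for every ordered pair of distinct vertices $x,y$ there is a rainbow directed $xy$-path; $rc^*(D)$ is the minimum $k$ for which a rainbow connected arc-colouring with $k$ colours exists. $\Gamma$ is strongly rainbow connected if for every ordered pair of distinct vertices $x,y$ there is a rainbow directed $xy$-path of length $d_D(x,y)$; $src^*(D)$ is the minimum such $k$. The biorientation $\overleftrightarrow{G}$ of a graph $G$ is the digraph obtained by replacing each edge $uv$ by the two arcs $uv$ and $vu$. *)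

(* A digraph is a finite vertex type V with an arc relation
   arc : rel V (arc x y = there is an arc xy); no loops = irreflexive arc.
   Multiple arcs are impossible by construction. *)
From mathcomp Require Import all_boot.
Set Implicit Arguments. Unset Strict Implicit. Unset Printing Implicit Defensive.

Section Digraphs.
Variable V : finType.
Variable arc : rel V.

Definition strongly_connected : Prop := forall x y : V, connect arc x y.

(* A directed xy-path, given as the list p of vertices after x:
   x -> p_0 -> ... -> y, with all vertices distinct.  Its length is size p. *)
Definition is_dipath (x y : V) (p : seq V) : bool :=
  [&& path arc x p, last x p == y & uniq (x :: p)].

Definition path_colours (k : nat) (c : V -> V -> 'I_k) (x : V) (p : seq V)
  : seq 'I_k := [seq c a.1 a.2 | a <- zip (x :: p) p].

Definition rainbow (k : nat) (c : V -> V -> 'I_k) (x : V) (p : seq V) : bool :=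
  uniq (path_colours c x p).

Definition geodesic (x y : V) (p : seq V) : Prop :=
  is_dipath x y p /\ forall q, is_dipath x y q -> size p <= size q.

(* arc-colourings with k colours {1..k} are functions on ordered pairs with
   values in 'I_k; only the values on arcs matter. *)
Definition rainbow_connected (k : nat) (c : V -> V -> 'I_k) : Prop :=
  forall x y, x != y -> exists p, is_dipath x y p && rainbow c x p.

Definition strongly_rainbow_connected (k : nat) (c : V -> V -> 'I_k) : Prop :=
  forall x y, x != y -> exists p, geodesic x y p /\ rainbow c x p.

Definition rc_eq (k : nat) : Prop :=
  (exists c : V -> V -> 'I_k, rainbow_connected c) /\
  (forall j, j < k -> ~ exists c : V -> V -> 'I_j, rainbow_connected c).

Definition src_eq (k : nat) : Prop :=
  (exists c : V -> V -> 'I_k, strongly_rainbow_connected c) /\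
  (forall j, j < k -> ~ exists c : V -> V -> 'I_j, strongly_rainbow_connected c).

Definition is_complete_biorientation : Prop :=
  forall x y : V, arc x y = (x != y).
End Digraphs.

From mathcomp Require Import all_boot.
Set Implicit Arguments. Unset Strict Implicit.

(* A rainbow path with k colours has length at most k.  With one colour every
   pair of distinct vertices must therefore be joined by an arc, so D is the
   complete biorientation, and there any colouring is strongly rainbow
   connected through the single arcs.  With two colours a rainbow xy-path has
   length at most 2, while a non-adjacent pair is at distance at least 2, so
   the rainbow paths of a rainbow connected 2-colouring are already
   geodesics. *)

Section RainbowConnection.
Variable V : finType.
Variable arc : rel V.

Lemma size_path_colours k (c : V -> V -> 'I_k) x p :
  size (path_colours c x p) = size p.
Proof. by rewrite /path_colours size_map size_zip /=; apply/minn_idPr. Qed.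

Lemma rainbow_size k (c : V -> V -> 'I_k) x p : rainbow c x p -> size p <= k.
Proof.
move=> /card_uniqP card_colours; rewrite -(size_path_colours c x p).
by rewrite -card_colours; apply: leq_trans (max_card _) _; rewrite card_ord.
Qed.

Lemma dipath_size_gt0 x y p : x != y -> is_dipath arc x y p -> 0 < size p.
Proof. by case: p => //= /negPf x_neq_y /and3P[_]; rewrite x_neq_y. Qed.

Lemma dipath1 x y z : is_dipath arc x y [:: z] -> arc x y.
Proof. by case/and3P => /=; rewrite andbT => xy /eqP <-. Qed.

Lemma arc_geodesic x y : arc x y -> x != y -> geodesic arc x y [:: y].
Proof.
move=> xy /negPf x_neq_y; split=> [|q].
  by rewrite /is_dipath /= xy inE x_neq_y eqxx.
by apply: dipath_size_gt0; rewrite x_neq_y.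
Qed.

Lemma nonarc_geodesic x y p : x != y -> ~~ arc x y ->
  is_dipath arc x y p -> size p <= 2 -> geodesic arc x y p.
Proof.
move=> x_neq_y /negPf not_xy xy_p p_le2; split=> // q xy_q.
apply: leq_trans p_le2 _.
case: q xy_q (dipath_size_gt0 x_neq_y xy_q) => [|z [|? ?]] // /dipath1.
by rewrite not_xy.
Qed.

Lemma strongly_rainbow_connected_rc k (c : V -> V -> 'I_k) :
  strongly_rainbow_connected arc c -> rainbow_connected arc c.
Proof.
move=> src x y xy; have [p [[xy_p _] rainbow_p]] := src x y xy.
by exists p; rewrite xy_p rainbow_p.
Qed.

Lemma rainbow_connected1_complete (c : V -> V -> 'I_1) :
  irreflexive arc -> rainbow_connected arc c -> is_complete_biorientation arc.
Proof.
move=> arc_irr rc x y; have [->|x_neq_y] := eqVneq x y; first by rewrite arc_irr.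
have [p /andP[xy_p rainbow_p]] := rc x y x_neq_y.
move: (rainbow_size rainbow_p) (dipath_size_gt0 x_neq_y xy_p).
by case: p xy_p {rainbow_p} => [|z [|? ?]] // /dipath1.
Qed.

Lemma complete_strongly_rainbow_connected k (c : V -> V -> 'I_k) :
  is_complete_biorientation arc -> strongly_rainbow_connected arc c.
Proof.
move=> complete x y x_neq_y; exists [:: y]; split=> //.
by apply: arc_geodesic; rewrite ?complete.
Qed.

Lemma rainbow_connected2_strongly (c : V -> V -> 'I_2) :
  rainbow_connected arc c -> strongly_rainbow_connected arc c.
Proof.
move=> rc x y x_neq_y; have [xy | not_xy] := boolP (arc x y).
  by exists [:: y]; split; first exact: arc_geodesic.
have [p /andP[xy_p rainbow_p]] := rc x y x_neq_y.
by exists p; split; first exact: nonarc_geodesic (rainbow_size rainbow_p).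
Qed.

Lemma no_colouring0 (v : V) (c : V -> V -> 'I_0) : False.
Proof. by case: (c v v). Qed.

Variable v : V.
Hypothesis arc_irr : irreflexive arc.

Let const1 : V -> V -> 'I_1 := fun _ _ => ord0.

Lemma rc_eq1_complete : rc_eq arc 1 <-> is_complete_biorientation arc.
Proof.
split=> [[[c rc] _] | complete]; first exact: rainbow_connected1_complete rc.
split=> [|[|j] // _ [c _]]; last exact: no_colouring0 v c.
by exists const1; apply/strongly_rainbow_connected_rc/complete_strongly_rainbow_connected.
Qed.

Lemma src_eq1_complete : src_eq arc 1 <-> is_complete_biorientation arc.
Proof.
split=> [[[c src] _] | complete].
  exact: rainbow_connected1_complete (strongly_rainbow_connected_rc src).
split=> [|[|j] // _ [c _]]; last exact: no_colouring0 v c.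
by exists const1; apply: complete_strongly_rainbow_connected.
Qed.

Lemma rc_eq2_src_eq2 : rc_eq arc 2 <-> src_eq arc 2.
Proof.
split=> [[[c rc] min_rc] | [[c src] min_src]]; split.
- by exists c; apply: rainbow_connected2_strongly.
- case=> [|[|j]] // _ [c' src']; first exact: no_colouring0 v c'.
  by apply: (min_rc 1) => //; exists c'; apply: strongly_rainbow_connected_rc.
- by exists c; apply: strongly_rainbow_connected_rc.
- case=> [|[|j]] // _ [c' rc']; first exact: no_colouring0 v c'.
  apply: (min_src 1) => //; exists const1.
  exact/complete_strongly_rainbow_connected/(rainbow_connected1_complete arc_irr rc').
Qed.

End RainbowConnection.

Theorem theorem2 (V : finType) (arc : rel V) :
  irreflexive arc -> strongly_connected arc -> 2 <= #|V| ->
  ((src_eq arc 1 <-> rc_eq arc 1) /\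
   (rc_eq arc 1 <-> is_complete_biorientation arc)) /\
  (rc_eq arc 2 <-> src_eq arc 2).
Proof.
move=> arc_irr _ /ltnW /card_gt0P[v _].
have rc1 := rc_eq1_complete v arc_irr; have src1 := src_eq1_complete v arc_irr.
split; last exact: rc_eq2_src_eq2 v arc_irr.
by split=> //; apply: iff_trans src1 (iff_sym rc1).
Qed.
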